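(* Let $M$ be a partial commutative monoid and let $\mathrm{cl}$ be a strong closure operator on $\mathcal P(M)$ such that the collection $\mathcal C=\{X\subseteq M\mid \mathrm{cl}(X)=X\}$ of closed sets, ordered by inclusion, has a Heyting implication. Then $\mathcal C$ is a BI algebra with $\bot=\mathrm{cl}(\emptyset)$, $\top=M$, $X\wedge Y=X\cap Y$, $X\vee Y=\mathrm{cl}(X\cup Y)$, the given Heyting implication, $\mathsf{emp}=\mathrm{cl}(\mathbf 0)$, $X\ast Y=\mathrm{cl}(X\bullet Y)$ and $X-\!\!\ast\,Y=\mathrm{cl}(X-\!\!\bullet\,Y)$.
   Context: A partial commutative monoid $(M,\cdot,e)$ has a partial commutative, associative operation $\cdot$ with unit $e$; write $x\cdot y=\bot$ if undefined. On $\mathcal P(M)$ define $\mathbf 0=\{e\}$, $X\bullet Y=\{x\cdot y\mid x\in X,y\in Y,x\cdot y\ne\bot\}$, $X-\!\!\bullet\,Y=\{z\mid \forall x\in X.\ z\cdot x\ne\bot\Rightarrow z\cdot x\in Y\}$. A closure operator on $\mathcal P(M)$ is a map $\mathrm{cl}$ with $X\subseteq\mathrm{cl}(X)$, $X\subseteq Y\Rightarrow\mathrm{cl}(X)\subseteq\mathrm{cl}(Y)$, and $\mathrm{cl}(\mathrm{cl}(X))=\mathrm{cl}(X)$. It is strong if $\mathrm{cl}(X)\bullet Y\subseteq\mathrm{cl}(X\bullet Y)$ for all $X,Y$. A BI algebra is a tuple $(B,\bot,\top,\wedge,\vee,\to,\mathsf{emp},\ast,-\!\!\ast)$ where $(B,\bot,\top,\wedge,\vee,\to)$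 is a bounded Heyting algebra, $\ast$ is monotone, commutative, associative with unit $\mathsf{emp}$, and $a\ast b\le c\iff a\le b-\!\!\ast\,c$. *)

From Stdlib Require Import FunctionalExtensionality PropExtensionality.

Set Implicit Arguments.

(* op x y = None encodes x . y = bottom (undefined). *)
Definition obind {M : Type} (o : option M) (f : M -> option M) : option M :=
  match o with Some w => f w | None => None end.

Record PCM := {
  pcm_car :> Type;
  pcm_op : pcm_car -> pcm_car -> option pcm_car;
  pcm_e : pcm_car;
  pcm_comm : forall x y, pcm_op x y = pcm_op y x;
  (* x.(y.z) = (x.y).z, both sides defined or both undefined *)
  pcm_assoc : forall x y z,
    obind (pcm_op y z) (fun w => pcm_op x w) = obind (pcm_op x y) (fun w => pcm_op w z);
  pcm_unit : forall x, pcm_op pcm_e x = Some x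
}.

Definition pset (M : Type) := M -> Prop.
Definition psub {M : Type} (X Y : pset M) : Prop := forall x, X x -> Y x.

Section Ops.
Variable M : PCM.

Definition pzero : pset M := fun z => z = pcm_e M.
Definition pdot (X Y : pset M) : pset M :=
  fun z => exists x y, X x /\ Y y /\ pcm_op M x y = Some z.
Definition pwand (X Y : pset M) : pset M :=
  fun z => forall x, X x -> forall w, pcm_op M z x = Some w -> Y w.
End Ops.

Record closure_op (M : Type) := {
  cl :> pset M -> pset M;
  cl_ext : forall X, psub X (cl X);
  cl_mono : forall X Y, psub X Y -> psub (cl X) (cl Y);
  cl_idem : forall X, cl (cl X) = cl X
}.

Definition strong {M : PCM} (c : closure_op M) : Prop :=
  forall X Y, psub (pdot M (c X) Y) (c (pdot M X Y)).

Definition closed_set {M : Type} (c : closure_op M) := { X : pset M | c X = X }.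

Definition cset {M : Type} {c : closure_op M} (X : closed_set c) : pset M := proj1_sig X.

Definition cle {M : Type} {c : closure_op M} (X Y : closed_set c) : Prop :=
  psub (cset X) (cset Y).

Section ClosedOps.
Variable M : Type.
Variable c : closure_op M.

Definition clC (X : pset M) : closed_set c := exist _ (c X) (cl_idem c X).

Lemma full_closed : c (fun _ => True) = (fun _ => True).
Proof.
  apply functional_extensionality; intro x; apply propositional_extensionality;
  split; intro; [exact I | apply (cl_ext c); exact I].
Qed.

Lemma inter_closed (X Y : closed_set c) :
  c (fun z => cset X z /\ cset Y z) = (fun z => cset X z /\ cset Y z).
Proof.
  destruct X as [X HX], Y as [Y HY]; simpl.
  apply functional_extensionality; intro x; apply propositional_extensionality; split.
  - intro H; split.
    + rewrite <- HX. exact (cl_mono c (fun z (h : X z /\ Y z) => proj1 h) x H).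
    + rewrite <- HY. exact (cl_mono c (fun z (h : X z /\ Y z) => proj2 h) x H).
  - intro H; exact (cl_ext c _ x H).
Qed.

Definition topC : closed_set c := exist _ (fun _ => True) full_closed.
Definition botC : closed_set c := clC (fun _ => False).
Definition meetC (X Y : closed_set c) : closed_set c :=
  exist _ (fun z => cset X z /\ cset Y z) (inter_closed X Y).
Definition joinC (X Y : closed_set c) : closed_set c :=
  clC (fun z => cset X z \/ cset Y z).
End ClosedOps.

Definition empC {M : PCM} (c : closure_op M) : closed_set c := clC c (pzero M).
Definition starC {M : PCM} {c : closure_op M} (X Y : closed_set c) : closed_set c :=
  clC c (pdot M (cset X) (cset Y)).
Definition wandC {M : PCM} {c : closure_op M} (X Y : closed_set c) : closed_set c :=
  clC c (pwand M (cset X) (cset Y)).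

Definition is_heyting_imp {M : Type} {c : closure_op M}
  (imp : closed_set c -> closed_set c -> closed_set c) : Prop :=
  forall X Y Z : closed_set c, cle (meetC X Z) Y <-> cle Z (imp X Y).

Record is_BI_algebra (B : Type) (le : B -> B -> Prop)
  (bot top : B) (meet join imp : B -> B -> B)
  (emp : B) (star wand : B -> B -> B) : Prop := {
  bi_refl : forall a, le a a;
  bi_trans : forall a b c, le a b -> le b c -> le a c;
  bi_antisym : forall a b, le a b -> le b a -> a = b;
  bi_bot : forall a, le bot a;
  bi_top : forall a, le a top;
  bi_meet : forall a b c, le c (meet a b) <-> (le c a /\ le c b);
  bi_join : forall a b c, le (join a b) c <-> (le a c /\ le b c);
  bi_imp : forall a b c, le (meet c a) b <-> le c (imp a b);
  bi_star_mono : forall a a' b b', le a a' -> le b b' -> le (star a b) (star a' b');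
  bi_star_comm : forall a b, star a b = star b a;
  bi_star_assoc : forall a b c, star a (star b c) = star (star a b) c;
  bi_star_unit : forall a, star emp a = a;
  bi_wand : forall a b c, le (star a b) c <-> le a (wand b c)
}.

(* Every operation on closed sets is "compute in P(M), then close", so the
   lattice part is immediate; strength makes cl(cl X • Y) = cl(X • Y), so closing inside a product can be
   ignored and the commutative-monoid laws of • on P(M) transfer to *; and the
   adjunction X • Y ⊆ Z <-> X ⊆ Y -• Z of P(M) transfers to * and -* because,
   again by strength, Y -• Z is already closed whenever Z is. *)

From Stdlib Require Import FunctionalExtensionality PropExtensionality ProofIrrelevance.

Lemma pset_ext {M : Type} (X Y : pset M) : psub X Y -> psub Y X -> X = Y.
Proof.
  intros HXY HYX; apply functional_extensionality; intro x.
  apply propositional_extensionality; split; auto.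
Qed.

Lemma psub_refl {M : Type} (X : pset M) : psub X X.
Proof. intros x Hx; exact Hx. Qed.

Lemma psub_trans {M : Type} {X Y Z : pset M} : psub X Y -> psub Y Z -> psub X Z.
Proof. intros HXY HYZ x Hx; auto. Qed.

Section Powerset.
Variable M : PCM.

Lemma pcm_regroup_l (x y u v z : M) :
  pcm_op M y u = Some v -> pcm_op M x v = Some z ->
  exists w, pcm_op M x y = Some w /\ pcm_op M w u = Some z.
Proof.
  intros Hyu Hxv; pose proof (pcm_assoc M x y u) as A.
  rewrite Hyu in A; simpl in A; rewrite Hxv in A.
  destruct (pcm_op M x y) as [w|]; simpl in A; [exists w; auto | discriminate].
Qed.

Lemma pcm_regroup_r (x y u w z : M) :
  pcm_op M x y = Some w -> pcm_op M w u = Some z ->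
  exists v, pcm_op M y u = Some v /\ pcm_op M x v = Some z.
Proof.
  intros Hxy Hwu; pose proof (pcm_assoc M x y u) as A.
  rewrite Hxy in A; simpl in A; rewrite Hwu in A.
  destruct (pcm_op M y u) as [v|]; simpl in A; [exists v; auto | discriminate].
Qed.

Lemma pdot_mono (X X' Y Y' : pset M) :
  psub X X' -> psub Y Y' -> psub (pdot M X Y) (pdot M X' Y').
Proof. intros HX HY z (x & y & Hx & Hy & Hxy); exists x, y; auto. Qed.

Lemma pdot_comm (X Y : pset M) : pdot M X Y = pdot M Y X.
Proof.
  apply pset_ext; intros z (x & y & Hx & Hy & Hxy); exists y, x;
    rewrite pcm_comm; auto.
Qed.

Lemma pdot_assoc (X Y Z : pset M) :
  pdot M X (pdot M Y Z) = pdot M (pdot M X Y) Z.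
Proof.
  apply pset_ext.
  - intros z (x & v & Hx & (y & u & Hy & Hu & Hyu) & Hxv).
    destruct (pcm_regroup_l _ _ _ _ _ Hyu Hxv) as (w & Hxy & Hwu).
    exists w, u; repeat split; auto; exists x, y; auto.
  - intros z (w & u & (x & y & Hx & Hy & Hxy) & Hu & Hwu).
    destruct (pcm_regroup_r _ _ _ _ _ Hxy Hwu) as (v & Hyu & Hxv).
    exists x, v; repeat split; auto; exists y, u; auto.
Qed.

Lemma pdot_pzero_l (X : pset M) : pdot M (pzero M) X = X.
Proof.
  apply pset_ext.
  - intros z (e & x & He & Hx & Hex); unfold pzero in He; subst e.
    rewrite pcm_unit in Hex; injection Hex as <-; exact Hx.
  - intros z Hz; exists (pcm_e M), z; repeat split; auto; apply pcm_unit.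
Qed.

Lemma pdot_pwand_adj (X Y Z : pset M) :
  psub (pdot M X Y) Z <-> psub X (pwand M Y Z).
Proof.
  split.
  - intros H x Hx y Hy w Hxy; apply H; exists x, y; auto.
  - intros H z (x & y & Hx & Hy & Hxy); exact (H x Hx y Hy z Hxy).
Qed.

End Powerset.

Section Closure.
Variables (M : Type) (c : closure_op M).

Lemma closed_set_eq (X Y : closed_set c) : cset X = cset Y -> X = Y.
Proof.
  destruct X as [X HX], Y as [Y HY]; simpl; intros <-.
  f_equal; apply proof_irrelevance.
Qed.

Lemma cset_closed (X : closed_set c) : c (cset X) = cset X.
Proof. exact (proj2_sig X). Qed.

Lemma cl_least (X : pset M) (Y : closed_set c) :
  psub X (cset Y) <-> psub (c X) (cset Y).
Proof.
  split.
  - intros H; rewrite <- cset_closed; apply cl_mono, H.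
  - intros H; exact (psub_trans (cl_ext c X) H).
Qed.

Lemma cle_antisym (X Y : closed_set c) : cle X Y -> cle Y X -> X = Y.
Proof. intros HXY HYX; apply closed_set_eq, pset_ext; assumption. Qed.

Lemma botC_least (X : closed_set c) : cle (botC c) X.
Proof. unfold cle, botC; simpl; rewrite <- cl_least; intros x Hx; contradiction. Qed.

Lemma topC_greatest (X : closed_set c) : cle X (topC c).
Proof. intros x _; exact I. Qed.

Lemma meetC_glb (X Y Z : closed_set c) :
  cle Z (meetC X Y) <-> cle Z X /\ cle Z Y.
Proof.
  split.
  - intros H; split; intros x Hx; apply (H x Hx).
  - intros [HX HY] x Hx; split; auto.
Qed.

Lemma joinC_lub (X Y Z : closed_set c) :
  cle (joinC X Y) Z <-> cle X Z /\ cle Y Z.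
Proof.
  unfold cle, joinC; simpl; rewrite <- cl_least; split.
  - intros H; split; intros x Hx; apply H; auto.
  - intros [HX HY] x [Hx | Hx]; auto.
Qed.

Lemma heyting_imp_adj (imp : closed_set c -> closed_set c -> closed_set c) :
  is_heyting_imp imp ->
  forall X Y Z : closed_set c, cle (meetC Z X) Y <-> cle Z (imp X Y).
Proof.
  intros Himp X Y Z; rewrite <- (Himp X Y Z).
  split; intros H x [Hx Hz]; apply H; split; assumption.
Qed.

End Closure.

Section Strong.
Variables (M : PCM) (c : closure_op M).
Hypothesis c_strong : strong c.

Lemma cl_pdot_cl_l (X Y : pset M) : c (pdot M (c X) Y) = c (pdot M X Y).
Proof.
  apply pset_ext.
  - intros z H; rewrite <- cl_idem; exact (cl_mono c (c_strong X Y) z H).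
  - apply cl_mono, pdot_mono; [apply cl_ext | apply psub_refl].
Qed.

Lemma cl_pdot_cl_r (X Y : pset M) : c (pdot M X (c Y)) = c (pdot M X Y).
Proof. rewrite pdot_comm, cl_pdot_cl_l, pdot_comm; reflexivity. Qed.

(* By strength, cl(Y -• Z) • Y ⊆ cl((Y -• Z) • Y) ⊆ cl Z = Z. *)
Lemma cl_pwand_closed (Y : pset M) (Z : closed_set c) :
  c (pwand M Y (cset Z)) = pwand M Y (cset Z).
Proof.
  apply pset_ext; [| apply cl_ext].
  apply pdot_pwand_adj.
  eapply psub_trans; [apply c_strong |].
  rewrite <- cl_least; apply pdot_pwand_adj, psub_refl.
Qed.

Lemma starC_mono (X X' Y Y' : closed_set c) :
  cle X X' -> cle Y Y' -> cle (starC X Y) (starC X' Y').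
Proof. intros HX HY; apply cl_mono, pdot_mono; assumption. Qed.

Lemma starC_comm (X Y : closed_set c) : starC X Y = starC Y X.
Proof. apply closed_set_eq; simpl; rewrite pdot_comm; reflexivity. Qed.

Lemma starC_assoc (X Y Z : closed_set c) :
  starC X (starC Y Z) = starC (starC X Y) Z.
Proof.
  apply closed_set_eq; simpl.
  rewrite cl_pdot_cl_r, cl_pdot_cl_l, pdot_assoc; reflexivity.
Qed.

Lemma starC_empC_l (X : closed_set c) : starC (empC c) X = X.
Proof.
  apply closed_set_eq; simpl.
  rewrite cl_pdot_cl_l, pdot_pzero_l; apply cset_closed.
Qed.

Lemma starC_wandC_adj (X Y Z : closed_set c) :
  cle (starC X Y) Z <-> cle X (wandC Y Z).
Proof.
  unfold cle, starC, wandC; simpl.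
  rewrite <- cl_least, pdot_pwand_adj, cl_pwand_closed; reflexivity.
Qed.

End Strong.

Theorem theorem5p8 (M : PCM) (c : closure_op M) (Hstrong : strong c)
  (imp : closed_set c -> closed_set c -> closed_set c)
  (Himp : is_heyting_imp imp) :
  is_BI_algebra (@cle M c) (botC c) (topC c) (@meetC M c) (@joinC M c) imp
    (empC c) (@starC M c) (@wandC M c).
Proof.
  constructor.
  - intros X; apply psub_refl.
  - intros X Y Z; apply psub_trans.
  - apply cle_antisym.
  - apply botC_least.
  - apply topC_greatest.
  - apply meetC_glb.
  - apply joinC_lub.
  - apply heyting_imp_adj; exact Himp.
  - apply starC_mono.
  - apply starC_comm.
  - apply starC_assoc; exact Hstrong.
  - apply starC_empC_l; exact Hstrong.
  - apply starC_wandC_adj; exact Hstrong.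
Qed.
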